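(* Let $\mathbb{F}$ be a field and $f(x)=(x-a)(x-b)\in\mathbb{F}[x]$ with $a,b\in\mathbb{F}^*$, $a\ne b$. Then every $f$-subgroup (in the multiplicative group of any extension field of $\mathbb{F}$) is one of $\langle a,b\rangle$, $\langle a\rangle$, $\langle b\rangle$. Moreover, if an $f$-subgroup $M$ is different from $\langle a,b\rangle$, then every $f$-sequence presenting $M$ is cyclic, so $M$ is a standard $f$-subgroup. Consequently $\langle a,b\rangle$ is the only possible non-standard $f$-subgroup.
   Context: An $f$-sequence is a two-way infinite sequence $(s_n)_{n\in\mathbb{Z}}$ with $f(\sigma)s=0$, where $(\sigma s)_n=s_{n+1}$ (here: $s_n=(a+b)s_{n-1}-ab\,s_{n-2}$). A sequence $s$ presents a finite multiplicative subgroup $M$ if $s$ has smallest period $|M|$ and $M=\{s_0,\ldots,s_{|M|-1}\}$; $M$ is an $f$-subgroup if some $f$-sequence presents it. A sequence is cyclic if there is $\alpha$ with $s_{n+1}=\alpha s_n$ for all $n$. An $f$-subgroup is standard if every $f$-sequence presenting it is cyclic, and non-standard otherwise. $\langle S\rangle$ is the multiplicative group generated by $S$. *)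

From HB Require Import structures.
From mathcomp Require Import all_boot all_order all_algebra.
From mathcomp Require Import finmap.
Set Implicit Arguments. Unset Strict Implicit. Unset Printing Implicit Defensive.
Import Order.TTheory GRing.Theory Num.Theory.
Local Open Scope ring_scope.
Local Open Scope fset_scope.

Section Defs.
Variable K : fieldType.

Definition fseq (a b : K) (s : int -> K) : Prop :=
  forall n : int, s n = ((a + b) * s (n - 1) - a * b * s (n - 2))%R.

Definition is_period (s : int -> K) (p : nat) : Prop :=
  forall n : int, s (n + p%:Z)%R = s n.

Definition smallest_period (s : int -> K) (p : nat) : Prop :=
  (0 < p)%N /\ is_period s p /\ (forall q : nat, (0 < q < p)%N -> ~ is_period s q).

Definition finite_mulsubgroup (M : {fset K}) : Prop :=
  1 \in M /\ (forall x, x \in M -> x != 0) /\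
  (forall x y, x \in M -> y \in M -> x * y \in M) /\
  (forall x, x \in M -> x^-1 \in M).

Definition presents (s : int -> K) (M : {fset K}) : Prop :=
  smallest_period s #|` M| /\
  (forall x, x \in M <-> exists2 i : nat, (i < #|` M|)%N & x = s i%:Z).

Definition f_subgroup (a b : K) (M : {fset K}) : Prop :=
  finite_mulsubgroup M /\ exists s, fseq a b s /\ presents s M.

Definition cyclic_seq (s : int -> K) : Prop :=
  exists alpha : K, forall n : int, s (n + 1)%R = alpha * s n.

Definition standard (a b : K) (M : {fset K}) : Prop :=
  f_subgroup a b M /\ forall s, fseq a b s -> presents s M -> cyclic_seq s.

Definition subgroup_pred (P : K -> Prop) : Prop :=
  P 1 /\ (forall x, P x -> x != 0) /\
  (forall x y, P x -> P y -> P (x * y)) /\ (forall x, P x -> P x^-1).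

Definition gen (S : K -> Prop) (x : K) : Prop :=
  forall P, subgroup_pred P -> (forall y, S y -> P y) -> P x.

Definition set_eq (M : {fset K}) (P : K -> Prop) : Prop :=
  forall x, x \in M <-> P x.

End Defs.

From HB Require Import structures.
From mathcomp Require Import all_boot all_order all_algebra.
From mathcomp Require Import finmap zify ring.
Import GRing.Theory.
Set Implicit Arguments. Unset Strict Implicit.
Local Open Scope ring_scope.

(* Let s be an f-sequence presenting a finite subgroup M of K^*,
   with m = #|M|.  Since a b != 0, s is determined by (s 0, s 1) in both
   directions, and s n = c a^n + d b^n for the unique c, d with
   s 0 = c + d, s 1 = c a + d b.  Three cases:
   - d = 0, i.e. s 1 = a s 0: s is geometric of ratio a (so cyclic), its terms
     are a^i s 0, and 1 in M forces s 0 in <a>; hence M = <a>;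
   - c = 0: symmetrically M = <b> and s is cyclic;
   - c, d != 0: periodicity gives a^m = b^m = 1, hence a, b in M (a finite
     subgroup of order m contains every m-th root of unity); the products
     a^i b^j (i, j < m) form a set H of size at least m (its size is a period
     of s), contained in M, so M = H = <a, b>. *)

Section Recurrence.
Variables (K : fieldType) (A B : K).
Implicit Types (s t : int -> K).

Lemma fseq_step s : fseq A B s ->
  forall n, s (n + 2) = (A + B) * s (n + 1) - A * B * s n.
Proof.
move=> hs n; rewrite hs; have -> : n + 2 - 1 = n + 1 by lia.
by have -> : n + 2 - 2 = n by lia.
Qed.

Lemma fseq_shift s (k : int) : fseq A B s -> fseq A B (fun n => s (n + k)).
Proof. by move=> hs n; rewrite hs; congr (_ * s _ - _ * s _); lia. Qed.

Lemma fseq_scale s x : fseq A B s -> fseq A B (fun n => x * s n).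
Proof. by move=> hs n; rewrite {1}hs; ring. Qed.

Lemma fseq_sym s : fseq A B s -> fseq B A s.
Proof. by move=> hs n; rewrite {1}hs; ring. Qed.

Lemma closed_form s c d : fseq A B s -> s 0 = c + d -> s 1 = c * A + d * B ->
  forall n : nat, s n = c * A ^+ n + d * B ^+ n.
Proof.
move=> hs e0 e1.
suff h : forall n : nat, s n = c * A ^+ n + d * B ^+ n /\
    s n.+1 = c * A ^+ n.+1 + d * B ^+ n.+1 by move=> n; case: (h n).
elim=> [|n [h1 h2]]; first by rewrite !expr0 !expr1 !mulr1.
split => //; have -> : Posz n.+2 = Posz n + 2 by lia.
rewrite (fseq_step hs); have -> : Posz n + 1 = Posz n.+1 by lia.
by rewrite h1 h2 !exprS; ring.
Qed.

Hypotheses (hA : A != 0) (hB : B != 0).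

(* Since A B != 0 the recurrence can be run backwards as well, so two
   f-sequences agreeing at 0 and 1 agree everywhere. *)
Lemma fseq_uniq s t : fseq A B s -> fseq A B t ->
  s 0 = t 0 -> s 1 = t 1 -> forall n, s n = t n.
Proof.
move=> hs ht e0 e1.
have fw : forall n : nat, s n = t n /\ s n.+1 = t n.+1.
  elim=> [|n [h1 h2]]; first by split.
  split => //; have -> : Posz n.+2 = Posz n + 2 by lia.
  rewrite (fseq_step hs) (fseq_step ht); have -> : Posz n + 1 = Posz n.+1 by lia.
  by rewrite h1 h2.
have back : forall u, fseq A B u -> forall n : nat, u (- Posz n.+1) =
    ((A + B) * u (- Posz n) - u (- Posz n + 1)) / (A * B).
  move=> u hu n; have := fseq_step hu (- Posz n.+1).
  have -> : - Posz n.+1 + 2 = - Posz n + 1 by lia.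
  have -> : - Posz n.+1 + 1 = - Posz n by lia.
  by move=> ->; field; rewrite ?hA ?hB ?mulf_neq0.
have bw : forall n : nat, s (- Posz n) = t (- Posz n) /\
    s (- Posz n + 1) = t (- Posz n + 1).
  elim=> [|n [h1 h2]]; first by split.
  rewrite (back s hs) (back t ht) h1 h2; split => //.
  by have -> : - Posz n.+1 + 1 = - Posz n by lia.
case=> n; first by case: (fw n).
have -> : Negz n = - Posz n.+1 by lia.
by case: (bw n.+1).
Qed.

Lemma geometric_fseq s : fseq A B s -> s 1 = B * s 0 ->
  forall n, s (n + 1) = B * s n.
Proof.
move=> hs e1.
apply: fseq_uniq; [exact: fseq_shift | exact: fseq_scale | by [] |].
by rewrite /= (fseq_step hs 0) !add0r e1; ring.
Qed.

Lemma period_of_unit_powers s c d (p : nat) : fseq A B s ->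
  s 0 = c + d -> s 1 = c * A + d * B -> A ^+ p = 1 -> B ^+ p = 1 ->
  is_period s p.
Proof.
move=> hs e0 e1 Ap Bp; apply: fseq_uniq => //; first exact: fseq_shift.
  by rewrite /= add0r (closed_form hs e0 e1 p) Ap Bp !mulr1 e0.
have -> : 1 + Posz p = Posz p.+1 by lia.
by rewrite /= (closed_form hs e0 e1 p.+1) !exprS Ap Bp !mulr1 e1.
Qed.

End Recurrence.

Lemma unit_power_of_period (K : fieldType) (A B c d : K) (m : nat) :
  A != B -> c != 0 ->
  c * A ^+ m + d * B ^+ m = c + d ->
  c * A ^+ m.+1 + d * B ^+ m.+1 = c * A + d * B -> A ^+ m = 1.
Proof.
move=> hAB c0 e0 e1; apply/eqP; rewrite -subr_eq0.
have E : (A - B) * (c * (A ^+ m - 1)) =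
    (c * A ^+ m.+1 + d * B ^+ m.+1 - (c * A + d * B))
    - B * (c * A ^+ m + d * B ^+ m - (c + d)) by rewrite !exprS; ring.
move/eqP: E; rewrite e0 e1 !subrr mulr0 subr0 !mulf_eq0.
by rewrite (subr_eq0 A B) (negbTE hAB) (negbTE c0).
Qed.

Section FiniteSubgroups.
Variable K : fieldType.

Lemma prod_mulx (H : seq K) x :
  \prod_(y <- H) (x * y) = x ^+ size H * \prod_(y <- H) y.
Proof.
elim: H => [|y H IH]; first by rewrite !big_nil expr0 mulr1.
by rewrite !big_cons IH /= exprS; ring.
Qed.

(* Lagrange for a single element: if multiplication by x permutes a finite set
   H of nonzero elements, then x^|H| = 1 (compare the products over H). *)
Lemma expf_size_stable (H : seq K) x : uniq H -> (forall y, y \in H -> y != 0) ->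
  x != 0 -> (forall y, y \in H -> x * y \in H) -> x ^+ size H = 1.
Proof.
move=> uH nz x0 cl.
have um : uniq (map (fun y => x * y) H) by rewrite map_inj_uniq //; exact: mulfI.
have sub : {subset map (fun y => x * y) H <= H}.
  by move=> z /mapP [y yH ->]; exact: cl.
have [_ eqi] := uniq_min_size um sub (eq_leq (esym (size_map _ _))).
have P0 : \prod_(y <- H) y != 0.
  by rewrite prodf_seq_neq0; apply/allP => y yH; apply/implyP => _; exact: nz.
have perm_H : perm_eq (map (fun y => x * y) H) H by apply: uniq_perm.
apply: (mulIf P0); rewrite mul1r -prod_mulx.
by rewrite -[RHS](perm_big _ perm_H) big_map.
Qed.

Lemma gen_in (S : K -> Prop) x : S x -> gen S x.
Proof. by move=> Sx P _; apply. Qed.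

Lemma gen1 (S : K -> Prop) : gen S 1.
Proof. by move=> P []. Qed.

Lemma genM (S : K -> Prop) x y : gen S x -> gen S y -> gen S (x * y).
Proof. by move=> hx hy P hP h; case: (hP) => _ [_ [hm _]]; apply: hm; [apply: hx | apply: hy]. Qed.

Lemma genV (S : K -> Prop) x : gen S x -> gen S x^-1.
Proof. by move=> hx P hP h; case: (hP) => _ [_ [_ hi]]; apply: hi; apply: hx. Qed.

Lemma genX (S : K -> Prop) x n : gen S x -> gen S (x ^+ n).
Proof.
move=> hx; elim: n => [|n IH]; first by rewrite expr0; exact: gen1.
by rewrite exprS; apply: genM.
Qed.

Section Subgroup.
Variables (M : {fset K}) (hM : finite_mulsubgroup M).

Lemma subgroup1 : 1 \in M.
Proof. by case: hM. Qed.

Lemma subgroup_nz x : x \in M -> x != 0.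
Proof. by case: hM => _ [h _]; exact: h. Qed.

Lemma subgroupM x y : x \in M -> y \in M -> x * y \in M.
Proof. by case: hM => _ [_ [h _]]; exact: h. Qed.

Lemma subgroupV x : x \in M -> x^-1 \in M.
Proof. by case: hM => _ [_ [_ h]]; exact: h. Qed.

Lemma subgroupX x n : x \in M -> x ^+ n \in M.
Proof.
move=> hx; elim: n => [|n IH]; first by rewrite expr0 subgroup1.
by rewrite exprS subgroupM.
Qed.

Lemma gen_sub (S : K -> Prop) x : (forall y, S y -> y \in M) -> gen S x -> x \in M.
Proof. by move=> hS hx; apply: (hx (fun y => y \in M)) => //; exact: hM. Qed.

Lemma expf_card x : x \in M -> x ^+ #|` M| = 1.
Proof.
move=> xM; apply: expf_size_stable; first exact: fset_uniq.
- exact: subgroup_nz.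
- exact: subgroup_nz.
- by move=> y; exact: subgroupM.
Qed.

(* ... and, since X^#|M| - 1 has at most #|M| roots, conversely. *)
Lemma root_of_unity_mem x : x ^+ #|` M| = 1 -> x \in M.
Proof.
move=> hx; apply/negPn/negP => nx; set m := #|` M|.
have m0 : (0 < m)%N by rewrite cardfs_gt0; apply/fset0Pn; exists 1; exact: subgroup1.
have p0 : ('X^m - 1%:P : {poly K}) != 0 by rewrite -size_poly_eq0 size_XnsubC.
have := max_poly_roots p0 (rs := x :: enum_fset M).
rewrite size_XnsubC //= ltnn.
have -> : root ('X^m - 1%:P) x by rewrite rootE !hornerE hx subrr.
have -> : all (root ('X^m - 1%:P)) (enum_fset M).
  by apply/allP => y yM; rewrite rootE !hornerE expf_card // subrr.
by rewrite nx fset_uniq => /(_ erefl erefl).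
Qed.

End Subgroup.

Definition pow_products (A B : K) (m : nat) : seq K :=
  undup [seq A ^+ i * B ^+ j | i <- iota 0 m, j <- iota 0 m].

Lemma mem_pow_products (A B : K) m y : y \in pow_products A B m <->
  exists i j, [/\ (i < m)%N, (j < m)%N & y = A ^+ i * B ^+ j].
Proof.
rewrite mem_undup; split.
  move/allpairsP => [[i j] /= [hi hj ->]]; exists i, j.
  by move: hi hj; rewrite !mem_iota /= !add0n.
case=> i [j [hi hj ->]]; apply/allpairsP; exists (i, j) => /=.
by rewrite !mem_iota /= !add0n hi hj.
Qed.

(* When A^m = B^m = 1, multiplication by A and by B permutes these products,
   hence A and B have order dividing their number. *)
Lemma pow_products_unit_powers (A B : K) m : (0 < m)%N -> A != 0 -> B != 0 ->
  A ^+ m = 1 -> B ^+ m = 1 ->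
  let H := pow_products A B m in A ^+ size H = 1 /\ B ^+ size H = 1.
Proof.
move=> m0 hA hB Am Bm H.
have Hnz y : y \in H -> y != 0.
  by move=> /mem_pow_products [i [j [_ _ ->]]]; rewrite mulf_neq0 // expf_neq0.
have uH : uniq H by exact: undup_uniq.
split; apply: expf_size_stable => // y /mem_pow_products [i [j [hi hj ->]]];
  apply/mem_pow_products.
- exists (i.+1 %% m)%N, j.
  by rewrite ltn_pmod // hj (expr_mod i.+1 Am) exprS mulrA.
- exists i, (j.+1 %% m)%N.
  by rewrite ltn_pmod // hi (expr_mod j.+1 Bm) exprS mulrCA.
Qed.

End FiniteSubgroups.

Section Presentation.
Variables (K : fieldType) (M : {fset K}) (s : int -> K) (hp : presents s M).
Let m := #|` M|.

Lemma presents_card_gt0 : (0 < m)%N.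
Proof. by case: hp => [[]]. Qed.

Lemma presents_period : is_period s m.
Proof. by case: hp => [[_ []]]. Qed.

Lemma presents_period_min (q : nat) : (0 < q)%N -> is_period s q -> (m <= q)%N.
Proof.
move=> q0 hq; rewrite leqNgt; apply/negP => hlt.
by case: hp => [[_ [_ hmin]] _]; apply: (hmin q) => //; rewrite q0 hlt.
Qed.

Lemma presents_mem (n : nat) : s n \in M.
Proof.
have per q r : s (q * m + r)%N = s r.
  elim: q => [|q IH]; first by rewrite mul0n add0n.
  have -> : Posz (q.+1 * m + r)%N = Posz (q * m + r)%N + Posz m by lia.
  by rewrite presents_period.
case: hp => _ h; apply/h; exists (n %% m)%N; first by rewrite ltn_pmod // presents_card_gt0.
by rewrite {1}(divn_eq n m) per.
Qed.

Lemma presents_elt x : x \in M -> exists2 i : nat, (i < m)%N & x = s i.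
Proof. by case: hp => _ h /h. Qed.

End Presentation.

Section Classification.
Variables (K : fieldType) (A B : K) (hA : A != 0) (hB : B != 0).
Variables (M : {fset K}) (hM : finite_mulsubgroup M) (s : int -> K).
Hypotheses (hs : fseq A B s) (hp : presents s M).

Lemma geometric_presentation : s 1 = B * s 0 ->
  cyclic_seq s /\ set_eq M (gen (fun y => y = B)).
Proof.
move=> e1; have cyc := geometric_fseq hA hB hs e1.
split; first by exists B.
have pw (n : nat) : s n = B ^+ n * s 0.
  elim: n => [|n IH]; first by rewrite expr0 mul1r.
  have -> : Posz n.+1 = Posz n + 1 by lia.
  by rewrite cyc IH exprS mulrA.
have s0 : s 0 != 0 by apply: (subgroup_nz hM); exact: (presents_mem hp 0%N).
move=> x; split; last first.
  apply: gen_sub => // y ->.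
  have -> : B = s 1 * (s 0)^-1 by rewrite e1 mulfK.
  by rewrite subgroupM ?subgroupV ?(presents_mem hp).
move=> /(presents_elt hp) [i _ ->]; rewrite pw.
have [k _ ek] := presents_elt hp (subgroup1 hM).
have -> : s 0 = (B ^+ k)^-1.
  by apply: (mulfI (expf_neq0 k hB)); rewrite mulfV ?expf_neq0 // -pw -ek.
by apply: genM; [|apply: genV]; apply: genX; apply: gen_in.
Qed.

(* Generic case: both coefficients c, d of the closed form are nonzero, so the
   period #|M| of s forces A and B to be #|M|-th roots of unity. *)
Lemma generic_unit_powers : A != B -> s 1 != B * s 0 -> s 1 != A * s 0 ->
  exists c d, [/\ s 0 = c + d, s 1 = c * A + d * B,
                  A ^+ #|` M| = 1 & B ^+ #|` M| = 1].
Proof.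
move=> hAB nB nA; set m := #|` M|.
have BA : B - A != 0 by rewrite subr_eq0 eq_sym.
set c := (B * s 0 - s 1) / (B - A); set d := (s 1 - A * s 0) / (B - A).
have c0 : c != 0 by rewrite mulf_neq0 ?invr_eq0 // subr_eq0 eq_sym.
have d0 : d != 0 by rewrite mulf_neq0 ?invr_eq0 // subr_eq0.
have e0 : s 0 = c + d by rewrite /c /d; field.
have e1 : s 1 = c * A + d * B by rewrite /c /d; field.
have cf := closed_form hs e0 e1.
have pm0 : c * A ^+ m + d * B ^+ m = c + d.
  by rewrite -cf -e0 -(presents_period hp 0) add0r.
have pm1 : c * A ^+ m.+1 + d * B ^+ m.+1 = c * A + d * B.
  by rewrite -cf -e1 -(presents_period hp 1); congr s; lia.
exists c, d; split => //; first exact: unit_power_of_period hAB c0 pm0 pm1.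
have hBA : B != A by rewrite eq_sym.
apply: (unit_power_of_period (d := c) hBA d0).
- by rewrite addrC pm0 addrC.
- by rewrite addrC pm1 addrC.
Qed.

(* In the generic case M consists of the products A^i B^j: these lie in M,
   and there are at least #|M| of them since their number is a period of s.
   Hence M = <A, B>. *)
Lemma generic_presentation : A != B -> s 1 != B * s 0 -> s 1 != A * s 0 ->
  set_eq M (gen (fun y => y = A \/ y = B)).
Proof.
move=> hAB nB nA; set m := #|` M|.
have [c [d [e0 e1 Am Bm]]] := generic_unit_powers hAB nB nA.
have m0 := presents_card_gt0 hp.
set H := pow_products A B m.
have [Ah Bh] := pow_products_unit_powers m0 hA hB Am Bm.
have HM : {subset H <= enum_fset M}.
  move=> y /mem_pow_products [i [j [_ _ ->]]].
  by apply: subgroupM => //; apply: subgroupX => //; apply: root_of_unity_mem.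
have Hm : (m <= size H)%N.
  apply: (presents_period_min hp); last exact: period_of_unit_powers hs e0 e1 Ah Bh.
  rewrite lt0n size_eq0; apply/eqP => E.
  have : 1 \in H by apply/mem_pow_products; exists 0%N, 0%N; rewrite m0 !expr0 mulr1.
  by rewrite E.
have [_ eqH] := uniq_min_size (undup_uniq _) HM Hm.
move=> x; split; last by apply: gen_sub => // y [->|->]; apply: root_of_unity_mem.
move=> xM; have : x \in H by rewrite eqH.
by move/mem_pow_products => [i [j [_ _ ->]]];
   apply: genM; apply: genX; apply: gen_in; [left | right].
Qed.

End Classification.

Lemma presentation_cases (K : fieldType) (A B : K) (M : {fset K}) (s : int -> K) :
  A != 0 -> B != 0 -> A != B -> finite_mulsubgroup M -> fseq A B s -> presents s M ->
  set_eq M (gen (fun y => y = A \/ y = B)) \/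
  (cyclic_seq s /\ (set_eq M (gen (fun y => y = A)) \/
                    set_eq M (gen (fun y => y = B)))).
Proof.
move=> hA hB hAB hM hs hp.
have [eB|nB] := eqVneq (s 1) (B * s 0).
  by have [cyc hMB] := geometric_presentation hA hB hM hs hp eB; right; split; [|right].
have [eA|nA] := eqVneq (s 1) (A * s 0).
  have [cyc hMA] := geometric_presentation hB hA hM (fseq_sym hs) hp eA.
  by right; split; [|left].
by left; apply: generic_presentation.
Qed.

Local Open Scope fset_scope.

Theorem mainTheorem5 (F K : fieldType) (iota : {rmorphism F -> K}) (a b : F)
  (ha : a != 0) (hb : b != 0) (hab : a != b) (M : {fset K}) :
  f_subgroup (iota a) (iota b) M ->
  (set_eq M (gen (fun y => y = iota a \/ y = iota b)) \/
   set_eq M (gen (fun y => y = iota a)) \/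
   set_eq M (gen (fun y => y = iota b))) /\
  (~ set_eq M (gen (fun y => y = iota a \/ y = iota b)) ->
   standard (iota a) (iota b) M).
Proof.
move=> [hM [s [hs hp]]].
have hA : iota a != 0 by rewrite fmorph_eq0.
have hB : iota b != 0 by rewrite fmorph_eq0.
have hAB : iota a != iota b by rewrite (inj_eq (fmorph_inj iota)).
split.
  by case: (presentation_cases hA hB hAB hM hs hp) => [h | [_ h]]; [left | right].
move=> not_ab; split; first by split => //; exists s.
move=> t ht htp.
by case: (presentation_cases hA hB hAB hM ht htp) => [h | [h _]].
Qed.
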